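(* Let $n\ge2$, $A\in\mathbb{R}^{n\times n}$, $C\in\mathbb{R}^{1\times n}$, and suppose $(C,A)$ is observable, i.e. $\operatorname{rank}[C^T\ A^TC^T\ \cdots\ (A^{n-1})^TC^T]=n$. Let $S_0:=\mathcal{N}(C)$ and $S_k:=AS_{k-1}\cap S_0$ for $k\ge1$. Then the system $$\hat x^+ = A\big((\hat x+AS_{n-2})\cap(x+S_0)\big),$$ i.e. $\hat x^+\in g(\hat x,y):=A\big((\hat x+AS_{n-2})\cap\{\eta\in\mathbb{R}^n: C\eta=y\}\big)$ with $y=Cx$, is a deadbeat observer for $x^+=Ax$, $y=Cx$.
   Context: $AS:=\{As:s\in S\}$ and $\hat x+S:=\{\hat x+s:s\in S\}$. Solutions: $\phi(0,x)=x$, $\phi(k+1,x)=A\phi(k,x)$. Given $g:\mathbb{R}^n\times\mathbb{R}\rightrightarrows\mathbb{R}^n$, a solution of $\hat x^+\in g(\hat x,Cx)$ driven by $x^+=Ax$ is any sequence $\psi(k,\hat x,x)$ with $\psi(0,\hat x,x)=\hat x$, $\psi(k+1,\hat x,x)\in g(\psi(k,\hat x,x),C\phi(k,x))$. The system $\hat x^+\in g(\hat x,y)$ is a deadbeat observer if there is $p\ge1$ such that all such solutions satisfy $\psi(k,\hat x,x)=\phi(k,x)$ for all $x,\hat x\in\mathbb{R}^n$ and all $k\ge p$. *)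

From HB Require Import structures.
From mathcomp Require Import all_boot all_order all_algebra.
Set Implicit Arguments. Unset Strict Implicit. Unset Printing Implicit Defensive.
Import Order.TTheory GRing.Theory Num.Theory.
Local Open Scope ring_scope.

Section Defs.
Variables (R : realFieldType) (n : nat).

Definition obs_mx (A : 'M[R]_n) (C : 'rV[R]_n) : 'M[R]_n :=
  \matrix_(j < n, i < n) (((A ^+ i)^T *m C^T) j 0).

Definition observable (A : 'M[R]_n) (C : 'rV[R]_n) : Prop :=
  \rank (obs_mx A C) = n.

Definition img (A : 'M[R]_n) (S : 'cV[R]_n -> Prop) : 'cV[R]_n -> Prop :=
  fun v => exists s, S s /\ v = A *m s.
Definition translate (xh : 'cV[R]_n) (S : 'cV[R]_n -> Prop) : 'cV[R]_n -> Prop :=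
  fun v => exists s, S s /\ v = xh + s.

Fixpoint Sk (A : 'M[R]_n) (C : 'rV[R]_n) (k : nat) : 'cV[R]_n -> Prop :=
  match k with
  | O => fun s => C *m s = 0
  | k'.+1 => fun s => img A (Sk A C k') s /\ C *m s = 0
  end.

Definition phi (A : 'M[R]_n) (k : nat) (x : 'cV[R]_n) : 'cV[R]_n := A ^+ k *m x.

Definition is_solution (A : 'M[R]_n) (C : 'rV[R]_n)
  (g : 'cV[R]_n -> 'M[R]_1 -> 'cV[R]_n -> Prop)
  (xh x : 'cV[R]_n) (psi : nat -> 'cV[R]_n) : Prop :=
  psi 0%N = xh /\ forall k, g (psi k) (C *m phi A k x) (psi k.+1).

Definition deadbeat_observer (A : 'M[R]_n) (C : 'rV[R]_n)
  (g : 'cV[R]_n -> 'M[R]_1 -> 'cV[R]_n -> Prop) : Prop :=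
  exists p : nat, (1 <= p)%N /\
    forall (x xh : 'cV[R]_n) (psi : nat -> 'cV[R]_n),
      is_solution A C g xh x psi ->
      forall k, (p <= k)%N -> psi k = phi A k x.

(* g(xh, y) = A ((xh + A S_{n-2}) ∩ {eta | C eta = y}) ; g xh y v means v ∈ g(xh,y) *)
Definition g_obs (A : 'M[R]_n) (C : 'rV[R]_n) :
  'cV[R]_n -> 'M[R]_1 -> 'cV[R]_n -> Prop :=
  fun xh y => img A (fun eta => translate xh (img A (Sk A C (n - 2))) eta
                                /\ C *m eta = y).
End Defs.

From HB Require Import structures.
From mathcomp Require Import all_boot all_order all_algebra.
Set Implicit Arguments. Unset Strict Implicit. Unset Printing Implicit Defensive.
Import Order.TTheory GRing.Theory Num.Theory.
Local Open Scope ring_scope.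

(* Follow the estimation error [psi (k+1) - A^(k+1) x]. After one step of the
   observer it is [A w] with [w] in [S_0 = ker C].  If it is [A w] with [w] in
   [S_m], the next one is [A (w + s)] with [s] in [S_(n-2)]; the output
   constraint puts [A (w + s)] in [ker C], so the new [w] lies in
   [S_(min(m, n-2)+1)].  After [n] steps the error is thus [A w] with [w] in
   [S_(n-1)], and it stays so.  Every element of [S_k] is [A^k u] with
   [C A^j u = 0] for [j <= k], so observability forces [S_(n-1) = 0]. *)

Section DeadbeatObserver.
Variables (R : realFieldType) (n : nat) (A : 'M[R]_n) (C : 'rV[R]_n).

Lemma Sk_add k u v : Sk A C k u -> Sk A C k v -> Sk A C k (u + v).
Proof.
elim: k u v => [|k IHk] u v /=; first by rewrite mulmxDr => -> ->; rewrite addr0.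
move=> [[u' [Su' ->]] Cu] [[v' [Sv' ->]] Cv]; split.
  by exists (u' + v'); rewrite mulmxDr; split => //; apply: IHk.
by rewrite mulmxDr Cu Cv addr0.
Qed.

Lemma Sk_succ k v : Sk A C k.+1 v -> Sk A C k v.
Proof.
elim: k v => [|k IHk] v /=; first by case.
by move=> [[u [Su ->]] Cv]; split => //; exists u; split => //; apply: IHk.
Qed.

Lemma Sk_le i j v : (i <= j)%N -> Sk A C j v -> Sk A C i v.
Proof.
move=> /subnK <-; elim: (j - i)%N v => [|d IHd] v //= Sv.
by apply/IHd/Sk_succ; rewrite -addSn.
Qed.

Lemma Sk_powers k v : Sk A C k v ->
  exists2 u, v = A ^+ k *m u & forall j, (j <= k)%N -> C *m (A ^+ j *m u) = 0.
Proof.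
elim: k v => [|k IHk] v /=.
  move=> Cv; exists v; first by rewrite expr0 mul1mx.
  by move=> j; rewrite leqn0 => /eqP ->; rewrite expr0 mul1mx.
move=> [[v' [/IHk [u -> Cu] ->]] Cv].
have Ev : A *m (A ^+ k *m u) = A ^+ k.+1 *m u by rewrite mulmxA exprS mulmxE.
exists u => [|j]; first exact: Ev.
by rewrite leq_eqVlt => /predU1P [->|/Cu]; rewrite // -Ev.
Qed.

Lemma row_obs_mx_tr (i : 'I_n) : row i (obs_mx A C)^T = C *m A ^+ i.
Proof.
apply/rowP => j; rewrite !mxE; apply: eq_bigr => l _.
by rewrite !mxE mulrC.
Qed.

Lemma observable_ker_powers (u : 'cV[R]_n) : observable A C ->
  (forall j, (j < n)%N -> C *m (A ^+ j *m u) = 0) -> u = 0.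
Proof.
move=> obsAC Cu.
have unit_obs : (obs_mx A C)^T \in unitmx.
  by rewrite -row_free_unit /row_free mxrank_tr obsAC.
have obs_u : (obs_mx A C)^T *m u = 0.
  apply/row_matrixP => i.
  by rewrite row_mul row_obs_mx_tr -mulmxA Cu // row0.
by rewrite -(mulKmx unit_obs u) obs_u mulmx0.
Qed.

Lemma Sk_last_eq0 v : observable A C -> (0 < n)%N -> Sk A C n.-1 v -> v = 0.
Proof.
move=> obsAC n_gt0 /Sk_powers [u -> Cu].
suff -> : u = 0 by rewrite mulmx0.
by apply: observable_ker_powers => // j lt_jn; apply: Cu; rewrite -ltnS prednK.
Qed.

Lemma g_obs_error0 xh z xh' : g_obs A C xh (C *m z) xh' ->
  exists2 w, Sk A C 0 w & xh' = A *m z + A *m w.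
Proof.
move=> [eta [[_ Ceta] ->]]; exists (eta - z); first by rewrite /= mulmxBr Ceta subrr.
by rewrite -mulmxDr addrC subrK.
Qed.

Lemma g_obs_error_step m xh z xh' w : g_obs A C xh (C *m z) xh' ->
  Sk A C m w -> xh = z + A *m w ->
  exists2 w', Sk A C (minn m (n - 2)).+1 w' & xh' = A *m z + A *m w'.
Proof.
move=> [eta [[[_ [[s [Ss ->]] Eeta]] Ceta] ->]] Sw Exh.
have Ez : eta - z = A *m (w + s).
  by rewrite Eeta Exh mulmxDr addrC !addrA addNr add0r.
exists (eta - z); last by rewrite -mulmxDr addrC subrK.
split; last by rewrite mulmxBr Ceta subrr.
exists (w + s); split=> //.
by apply: Sk_add; [apply: Sk_le Sw; apply: geq_minl | apply: Sk_le Ss; apply: geq_minr].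
Qed.

End DeadbeatObserver.

Theorem corollary1 (R : realFieldType) (n : nat) (hn : (2 <= n)%N)
  (A : 'M[R]_n) (C : 'rV[R]_n) :
  observable A C -> deadbeat_observer A C (g_obs A C).
Proof.
move=> obsAC; exists n; split; first exact: ltnW.
move=> x xh psi [_ psiS].
have min_step k : (minn (minn k n.-1) (n - 2)).+1 = minn k.+1 n.-1.
  move: hn; case: (n) => [|[|n']] // _.
  by rewrite subn2 -minnA (minn_idPr (leqnSn n')) minnSS.
have error k : exists2 w, Sk A C (minn k n.-1) w & psi k.+1 = phi A k.+1 x + A *m w.
  elim: k => [|k [w Sw Epsi]].
    by have := g_obs_error0 (psiS 0%N); rewrite min0n /phi expr0 mul1mx expr1.
  rewrite -min_step /phi exprS -mulmxE -mulmxA.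
  exact: g_obs_error_step (psiS k.+1) Sw Epsi.
move=> [|k] le_nk; first by rewrite leqn0 in le_nk; rewrite (eqP le_nk) in hn.
have [w Sw ->] := error k.
rewrite (minn_idPr _) in Sw; last by rewrite -ltnS (ltn_predK hn).
by rewrite (Sk_last_eq0 obsAC _ Sw) ?mulmx0 ?addr0 // (ltnW hn).
Qed.
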